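(* Let $v\ge2$ be an integer with $\gcd(v,4)\ne2$ and $\gcd(v,18)\ne3$. Then an optimum $(d,2)$-CDA$((d+1)v^2;11,v)$ exists for every positive integer $d$ with $d+1\le v$.
   Context: Consecutive $t$-way interaction in an $N\times k$ array $A=(a_{ij})$ over a $v$-set $V$: $T=\{(i,x_i),\dots,(i+t-1,x_{i+t-1})\}$, $1\le i\le k-t+1$, $x_r\in V$; $\rho(A,T)=\{r: a_{r,j}=x_j\ \forall (j,x_j)\in T\}$, $\rho(A,\mathcal T)=\bigcup_{T\in\mathcal T}\rho(A,T)$. A $(d,t)$-CDA$(N;k,v)$ is an $N\times k$ array over $V$ in which every $t$ consecutive columns contain every $t$-tuple at least once, and such that for every set $\mathcal T$ of exactly $d$ distinct consecutive $t$-way interactions and every consecutive $t$-way interaction $T$: $\rho(A,T)\subseteq\rho(A,\mathcal T)$ iff $T\in\mathcal T$. It is optimum if $N=(d+1)v^t$. *)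

From mathcomp Require Import all_boot.
Set Implicit Arguments. Unset Strict Implicit. Unset Printing Implicit Defensive.

(* An N x k array over the v-set V := 'I_v is a function 'I_N -> 'I_k -> 'I_v
   (rows r, columns c).  Columns are 0-indexed.  A consecutive t-way
   interaction {(i,x_0),(i+1,x_1),...,(i+t-1,x_{t-1})} is represented by the
   pair (i, x) with i : 'I_k the starting column and x : 'I_t -> 'I_v the
   values; it is valid when i + t <= k.  (For t >= 1 distinct pairs are
   distinct interactions.) *)

Definition cinter (k t v : nat) : finType := ('I_k * {ffun 'I_t -> 'I_v})%type.

Definition valid_inter (k t v : nat) (T : cinter k t v) : bool := T.1 + t <= k.

Definition rho (N k t v : nat) (A : 'I_N -> 'I_k -> 'I_v) (T : cinter k t v)
  : {set 'I_N} :=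
  [set r : 'I_N | [forall j : 'I_t, forall c : 'I_k,
                    (nat_of_ord c == T.1 + j) ==> (A r c == T.2 j)]].

Definition rhoS (N k t v : nat) (A : 'I_N -> 'I_k -> 'I_v) (S : {set cinter k t v})
  : {set 'I_N} :=
  \bigcup_(T in S) rho A T.

Definition is_CDA (d t N k v : nat) (A : 'I_N -> 'I_k -> 'I_v) : Prop :=
  (forall T : cinter k t v, valid_inter T -> rho A T != set0) /\
  (forall (S : {set cinter k t v}) (T : cinter k t v),
      (forall T', T' \in S -> valid_inter T') -> #|S| = d -> valid_inter T ->
      (rho A T \subset rhoS A S <-> T \in S)).

From mathcomp Require Import all_boot.
Set Implicit Arguments. Unset Strict Implicit. Unset Printing Implicit Defensive.

(* Label the rows by triples (z, x, y) with a layer z < d + 1 and x, y < v,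
   and put B z (x, y) c in column c, where B is a "window code" over 'I_v:
   (a) inside one layer, the two entries of any window {c, c+1} of adjacent
       columns determine (x, y), so each layer is an orthogonal array of
       strength 2 on consecutive columns and every interaction is covered
       once per layer, i.e. d + 1 times;
   (b) the entries on two different windows determine the whole label, so
       two distinct interactions share at most one row.
   If T is not among d interactions S, the rows of T met by S number at most
   d < d + 1, so rho(T) is not inside rho(S): this is the detecting property.

   Window codes are closed under products and transfer along bijections.
   Over Z_n they arise as B z (x, y) c = (x or y) + g c z with a shift g that
   separates layers; a linear g works when gcd(n, 6) = 1, and tabulated shifts
   handle n = 4, 8, 9, 12, 24, 27.  Multiplying these covers exactly the v
   with gcd(v, 4) <> 2 and gcd(v, 18) <> 3. *)

Definition same_window (V : Type) (f g : nat -> V) (c : nat) : Prop :=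
  f c = g c /\ f c.+1 = g c.+1.

(* A window code for [k] columns over [V]: [B z u c] is the entry in column
   [c] of the row with layer [z] and in-layer label [u]. *)
Definition window_code (k : nat) (V : Type) (B : V -> V * V -> nat -> V) : Prop :=
  (forall z u u' c, c.+1 < k ->
     same_window (B z u) (B z u') c -> u = u') /\
  (forall z u z' u' i j, i < j -> j.+1 < k ->
     same_window (B z u) (B z' u') i -> same_window (B z u) (B z' u') j ->
     (z, u) = (z', u')).

Definition has_window_code (k : nat) (V : Type) : Prop :=
  exists B : V -> V * V -> nat -> V, window_code k B.

Definition window_order (k n : nat) : Prop := has_window_code k 'I_n.

Section CardTransfer.
Variables (V W : finType) (eqVW : #|V| = #|W|).

Definition card_transfer (x : V) : W := enum_val (cast_ord eqVW (enum_rank x)).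
Definition card_untransfer (y : W) : V :=
  enum_val (cast_ord (esym eqVW) (enum_rank y)).

Lemma card_transferK : cancel card_transfer card_untransfer.
Proof.
by move=> x; rewrite /card_transfer /card_untransfer enum_valK cast_ordK enum_rankK.
Qed.

Lemma card_untransferK : cancel card_untransfer card_transfer.
Proof.
by move=> y; rewrite /card_transfer /card_untransfer enum_valK cast_ordKV enum_rankK.
Qed.

End CardTransfer.

Lemma window_code_card k (V W : finType) :
  #|V| = #|W| -> has_window_code k V -> has_window_code k W.
Proof.
move=> eqVW [B [layerB twoB]].
pose f := card_transfer eqVW; pose g := card_untransfer eqVW.
have fI : injective f := can_inj (card_transferK eqVW).
have gI : injective g := can_inj (card_untransferK eqVW).
have gpI : injective (fun u : W * W => (g u.1, g u.2)).
  by move=> [a b] [a' b'] [/gI -> /gI ->].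
exists (fun z u c => f (B (g z) (g u.1, g u.2) c)); split.
  by move=> z u u' c ck [/fI e0 /fI e1]; apply: gpI; exact: (layerB _ _ _ c ck (conj e0 e1)).
move=> z [a b] z' [a' b'] i j ij jk [/fI e0 /fI e1] [/fI e2 /fI e3].
by case: (twoB _ _ _ _ _ _ ij jk (conj e0 e1) (conj e2 e3)) => /gI -> /gI -> /gI ->.
Qed.

Lemma window_code_prod k (V W : Type) :
  has_window_code k V -> has_window_code k W -> has_window_code k (V * W).
Proof.
move=> [B [layerB twoB]] [C [layerC twoC]].
exists (fun z u c => (B z.1 (u.1.1, u.2.1) c, C z.2 (u.1.2, u.2.2) c)); split.
  move=> [z1 z2] [[x1 x2] [y1 y2]] [[x1' x2'] [y1' y2']] c ck /= [[e0 f0] [e1 f1]].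
  case: (layerB _ _ _ _ ck (conj e0 e1)) => -> ->.
  by case: (layerC _ _ _ _ ck (conj f0 f1)) => -> ->.
move=> [z1 z2] [[x1 x2] [y1 y2]] [z1' z2'] [[x1' x2'] [y1' y2']] i j ij jk /=
  [[e0 f0] [e1 f1]] [[e2 f2] [e3 f3]].
case: (twoB _ _ _ _ _ _ ij jk (conj e0 e1) (conj e2 e3)) => -> -> ->.
by case: (twoC _ _ _ _ _ _ ij jk (conj f0 f1) (conj f2 f3)) => -> -> ->.
Qed.

Lemma window_order_mul k m n :
  window_order k m -> window_order k n -> window_order k (m * n).
Proof.
move=> Wm Wn; apply: window_code_card (window_code_prod Wm Wn).
by rewrite card_prod !card_ord.
Qed.

Lemma window_order1 k : window_order k 1.
Proof.
exists (fun z _ _ => z); split=> [z [x y] [x' y'] | z [x y] z' [x' y']] *.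
  by rewrite (ord1 x) (ord1 x') (ord1 y) (ord1 y').
by rewrite (ord1 x) (ord1 x') (ord1 y) (ord1 y') (ord1 z) (ord1 z').
Qed.

(* Within a layer, the label-to-window map is injective, hence onto: every
   pair of values appears on every window. *)
Lemma window_code_cover k (V : finType) (B : V -> V * V -> nat -> V) z c a b :
  window_code k B -> c.+1 < k -> exists u, B z u c = a /\ B z u c.+1 = b.
Proof.
move=> [layerB _] ck.
have inj_pair : injective (fun u => (B z u c, B z u c.+1)).
  by move=> u u' [e0 e1]; exact: (layerB z u u' c ck (conj e0 e1)).
have [h _ hK] := injF_bij inj_pair.
by exists (h (a, b)); case: (hK (a, b)) => -> ->.
Qed.

Lemma card_bigcup_le (I T : finType) (P : pred I) (F : I -> {set T}) :
  #|\bigcup_(i | P i) F i| <= \sum_(i | P i) #|F i|.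
Proof.
elim/big_rec2: _ => [|i n U _ IH]; first by rewrite cards0.
by apply: leq_trans (leq_card_setU _ _).1 _; rewrite leq_add2l.
Qed.

Lemma valid_inter2 k v (T : cinter k 2 v) : valid_inter T -> T.1.+1 < k.
Proof. by rewrite /valid_inter addn2. Qed.

Lemma cinter2_eq k v (T T' : cinter k 2 v) : T.1 = T'.1 :> nat ->
  T.2 ord0 = T'.2 ord0 -> T.2 ord_max = T'.2 ord_max -> T = T'.
Proof.
case: T T' => [c x] [c' x'] /= /val_inj <- x0 x1; congr (_, _).
apply/ffunP => -[[|[|//]] j2].
  by rewrite (_ : Ordinal j2 = ord0) //; apply: val_inj.
by rewrite (_ : Ordinal j2 = ord_max) //; apply: val_inj.
Qed.

Section WindowCodeCDA.
Variables (k v d : nat) (B : 'I_v -> 'I_v * 'I_v -> nat -> 'I_v).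
Hypotheses (B_code : window_code k B) (d_lt_v : d + 1 <= v).

Definition cda_rows := 'I_((d + 1) * v ^ 2).

Lemma card_row_labels : #|{: 'I_(d + 1) * ('I_v * 'I_v)}| = #|cda_rows|.
Proof. by rewrite !card_prod !card_ord mulnn. Qed.

Definition row_label (r : cda_rows) : 'I_(d + 1) * ('I_v * 'I_v) :=
  card_untransfer card_row_labels r.

Definition row_entry (r : cda_rows) (c : nat) : 'I_v :=
  B (widen_ord d_lt_v (row_label r).1) (row_label r).2 c.

Definition code_array (r : cda_rows) (c : 'I_k) : 'I_v := row_entry r c.

Lemma rho_code_array (T : cinter k 2 v) r : valid_inter T ->
  (r \in rho code_array T) =
  (row_entry r T.1 == T.2 ord0) && (row_entry r T.1.+1 == T.2 ord_max).
Proof.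
move=> /valid_inter2 T_valid.
have c0 : T.1 < k := ltnW T_valid.
rewrite inE; apply/forallP/andP => [covered | [e0 e1] j].
  split; [have := forallP (covered ord0) (Ordinal c0)
         | have := forallP (covered ord_max) (Ordinal T_valid)].
    by rewrite /= addn0 eqxx.
  by rewrite /= addn1 eqxx.
apply/forallP => c; apply/implyP => /eqP ec; rewrite /code_array ec.
case: j ec => [[|[|//]] j2] /= _.
  by rewrite addn0 (_ : Ordinal j2 = ord0) //; apply: val_inj.
by rewrite addn1 (_ : Ordinal j2 = ord_max) //; apply: val_inj.
Qed.

(* Each layer is an orthogonal array on consecutive column pairs, so every
   interaction is covered at least once per layer, hence [d + 1] times. *)
Lemma rho_code_array_large (T : cinter k 2 v) :
  valid_inter T -> d + 1 <= #|rho code_array T|.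
Proof.
move=> T_valid; have c_lt := valid_inter2 T_valid.
have all_layers : [set: 'I_(d + 1)] \subset [set (row_label r).1 | r in rho code_array T].
  apply/subsetP => z _.
  have [u [e0 e1]] :=
    window_code_cover (widen_ord d_lt_v z) (T.2 ord0) (T.2 ord_max) B_code c_lt.
  pose r := card_transfer card_row_labels (z, u).
  have r_label : row_label r = (z, u) by rewrite /row_label card_transferK.
  apply/imsetP; exists r; last by rewrite r_label.
  by rewrite rho_code_array // /row_entry r_label e0 e1 !eqxx.
rewrite -{1}(card_ord (d + 1)) -cardsT.
exact: leq_trans (subset_leq_card all_layers) (leq_imset_card _ _).
Qed.

Lemma row_entry_two_windows r r' i j : i < j -> j.+1 < k ->
  same_window (row_entry r) (row_entry r') i ->
  same_window (row_entry r) (row_entry r') j -> r = r'.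
Proof.
move=> ij jk wi wj; apply: (can_inj (card_untransferK card_row_labels)).
change (row_label r = row_label r').
case: (B_code.2 _ _ _ _ _ _ ij jk wi wj).
by case: (row_label r) (row_label r') => [z u] [z' u'] /= /val_inj -> ->.
Qed.

(* Two distinct interactions share at most one row: either they sit on
   different windows, which then determine the row, or on the same window
   with different values, which no row can satisfy. *)
Lemma rho_code_array_meet (T T' : cinter k 2 v) :
  valid_inter T -> valid_inter T' -> T != T' ->
  #|rho code_array T :&: rho code_array T'| <= 1.
Proof.
move=> T_valid T'_valid neqTT'.
apply/card_le1_eqP => r r'; rewrite !in_setI !rho_code_array //.
move=> /andP[/andP[/eqP a0 /eqP a1] /andP[/eqP b0 /eqP b1]].
move=> /andP[/andP[/eqP a0' /eqP a1'] /andP[/eqP b0' /eqP b1']].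
have wT : same_window (row_entry r) (row_entry r') T.1.
  by split; [rewrite a0 a0' | rewrite a1 a1'].
have wT' : same_window (row_entry r) (row_entry r') T'.1.
  by split; [rewrite b0 b0' | rewrite b1 b1'].
apply/esym; case: (ltngtP T.1 T'.1) => [lt | gt | eq_start].
- exact: row_entry_two_windows lt (valid_inter2 T'_valid) wT wT'.
- exact: row_entry_two_windows gt (valid_inter2 T_valid) wT' wT.
case/eqP: neqTT'; apply: cinter2_eq; first by rewrite eq_start.
  by rewrite -a0 -b0 eq_start.
by rewrite -a1 -b1 eq_start.
Qed.

(* If [rho T] were covered by the [d] interactions of [S] with [T] not in [S],
   each would meet [rho T] in at most one row, so [#|rho T| <= d]. *)
Lemma code_array_CDA : is_CDA d 2 code_array.
Proof.
split=> [T T_valid | S T S_valid card_S T_valid].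
  by rewrite -card_gt0; apply: leq_trans (rho_code_array_large T_valid); rewrite addn1.
split=> [sub_rho | T_in_S]; last first.
  by apply/subsetP => r r_in; apply/bigcupP; exists T.
apply/negPn/negP => T_notin_S.
have rho_sub : rho code_array T \subset
    \bigcup_(T' in S) (rho code_array T :&: rho code_array T').
  apply/subsetP => r r_in; have /bigcupP[T' T'_in r_in'] := subsetP sub_rho r r_in.
  by apply/bigcupP; exists T'; rewrite // in_setI r_in r_in'.
have : #|rho code_array T| <= d.
  apply: leq_trans (subset_leq_card rho_sub) _.
  apply: leq_trans (card_bigcup_le _ _) _.
  rewrite -[X in _ <= X]card_S -sum1_card; apply: leq_sum => T' T'_in.
  apply: rho_code_array_meet => //; first exact: S_valid.
  by apply: contraNneq T_notin_S => ->.
by rewrite leqNgt (leq_trans _ (rho_code_array_large T_valid)) // addn1.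
Qed.
End WindowCodeCDA.

(* In the shift construction the entry of column [c] is [y] for even [c] and
   [x] for odd [c]; [ycol i] and [xcol i] are the columns of window [i]
   carrying [y] and [x]. *)
Definition ycol (i : nat) : nat := if odd i then i.+1 else i.
Definition xcol (i : nat) : nat := if odd i then i else i.+1.

Definition separating_shift (k n : nat) (g : nat -> nat -> nat) : Prop :=
  forall i j z z', i < j -> j.+1 < k -> z < n -> z' < n ->
  g (ycol i) z + g (ycol j) z' = g (ycol i) z' + g (ycol j) z %[mod n] ->
  g (xcol i) z + g (xcol j) z' = g (xcol i) z' + g (xcol j) z %[mod n] ->
  z = z'.

Lemma eq_modDr_small n a b c : a < n -> b < n -> a + c = b + c %[mod n] -> a = b.
Proof. by move=> an bn /eqP; rewrite eqn_modDr !modn_small // => /eqP. Qed.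

Lemma mod_diff_eq n y y' a b a' b' :
  y + a = y' + a' %[mod n] -> y + b = y' + b' %[mod n] -> a + b' = a' + b %[mod n].
Proof.
move=> eqa eqb; apply/eqP; rewrite -(eqn_modDl (y + y')); apply/eqP.
have: (y + a) + (y' + b') = (y' + a') + (y + b) %[mod n].
  by rewrite -modnDm eqa -eqb modnDm.
by rewrite addnACA [(y' + a') + _]addnACA [y' + y]addnC.
Qed.

Section ShiftCode.
Variables (k n : nat) (g : nat -> nat -> nat).
Hypotheses (n_gt0 : 0 < n) (g_sep : separating_shift k n g).

Definition shift_entry (u : 'I_n * 'I_n) (c : nat) : nat :=
  if odd c then u.1 else u.2.

Definition shift_code (z : 'I_n) (u : 'I_n * 'I_n) (c : nat) : 'I_n :=
  Ordinal (ltn_pmod (shift_entry u c + g c z) n_gt0).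

Lemma shift_window z u z' u' i :
  same_window (shift_code z u) (shift_code z' u') i ->
  (u.2 : nat) + g (ycol i) z = u'.2 + g (ycol i) z' %[mod n] /\
  (u.1 : nat) + g (xcol i) z = u'.1 + g (xcol i) z' %[mod n].
Proof.
move=> [/(congr1 val) /= e0 /(congr1 val) /= e1].
by move: e0 e1; rewrite /shift_entry /ycol /xcol /=; case: (odd i).
Qed.

Lemma shift_code_window_code : window_code k shift_code.
Proof.
have layer z u u' c : same_window (shift_code z u) (shift_code z u') c -> u = u'.
  case: u u' => [x y] [x' y'] /shift_window [ey ex].
  by rewrite (val_inj (eq_modDr_small (ltn_ord y) (ltn_ord y') ey))
             (val_inj (eq_modDr_small (ltn_ord x) (ltn_ord x') ex)).
split=> [z u u' c _ | z u z' u' i j ij jk wi wj]; first exact: layer.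
have [yi xi] := shift_window wi; have [yj xj] := shift_window wj.
have ez : z = z'.
  apply: val_inj; apply: (g_sep ij jk (ltn_ord z) (ltn_ord z')).
    exact: mod_diff_eq yi yj.
  exact: mod_diff_eq xi xj.
by case: ez wi => <- /layer ->.
Qed.

End ShiftCode.

Lemma window_order_shift k n g :
  0 < n -> separating_shift k n g -> window_order k n.
Proof. by move=> n_gt0 g_sep; exists (shift_code g n_gt0); exact: shift_code_window_code. Qed.

Lemma coprime_mul_cancel n d z z' : coprime n d -> z < n -> z' < n ->
  d * z = d * z' %[mod n] -> z = z'.
Proof.
move=> cop_nd.
wlog le_zz' : z z' / z <= z'.
  move=> W zn z'n E; case: (leqP z z') => [|/ltnW] le; first exact: W.
  by apply/esym; apply: W.
move=> _ z'n /esym/eqP; rewrite eqn_mod_dvd ?leq_mul2l ?le_zz' ?orbT //.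
rewrite -mulnBr Gauss_dvdr //; have [/eqP|pos] := posnP (z' - z).
  by rewrite subn_eq0 => ge _; apply/eqP; rewrite eqn_leq le_zz' ge.
move/(dvdn_leq pos); rewrite leqNgt => /negP; case.
exact: leq_ltn_trans (leq_subr _ _) z'n.
Qed.

Lemma coprime6_small n d : coprime n 6 -> 0 < d -> d <= 3 -> coprime n d.
Proof.
rewrite (_ : 6 = 2 * 3) // coprimeMr => /andP[cop2 cop3].
by case: d => [|[|[|[|]]]] //= _ _; rewrite ?coprimen1.
Qed.

(* For distinct coefficients [a, b <= 3] and gcd(n, 6) = 1,
   [a z + b z' = a z' + b z (mod n)] forces [z = z']: the difference
   [(b - a)(z' - z)] vanishes and [b - a] is a unit. *)
Lemma small_coeff_cancel n a b z z' : coprime n 6 -> a <= 3 -> b <= 3 -> a != b ->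
  z < n -> z' < n -> a * z + b * z' = a * z' + b * z %[mod n] -> z = z'.
Proof.
move=> cop6 a3 b3 nab zn z'n E.
wlog ab : a b z z' a3 b3 nab zn z'n E / a < b.
  move=> W; case: (ltngtP a b) => [ab | ba | eab].
  - exact: (W a b z z').
  - apply/esym; apply: (W b a z' z b3 a3 _ z'n zn _ ba); first by rewrite eq_sym.
    by rewrite addnC E addnC.
  - by rewrite eab eqxx in nab.
have cop_d : coprime n (b - a).
  by apply: coprime6_small; [| rewrite subn_gt0 | exact: leq_trans (leq_subr _ _) b3].
have eb : b = a + (b - a) by rewrite subnKC // ltnW.
apply/esym; apply: (coprime_mul_cancel cop_d z'n zn).
move: E; set d := b - a in eb *; rewrite eb !mulnDl !addnA [a * z' + a * z]addnC.
by move/eqP; rewrite eqn_modDl => /eqP.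
Qed.

Lemma all_window_pairsP k (P : nat -> nat -> bool) :
  all (fun i => all (fun j => (i < j) && (j.+1 < k) ==> P i j) (iota 0 k)) (iota 0 k) ->
  forall i j, i < j -> j.+1 < k -> P i j.
Proof.
move=> allP_ij i j ij jk; have jk' : j < k := ltnW jk.
have ik : i < k := ltn_trans ij jk'.
have := allP (allP allP_ij i _) j; rewrite !mem_iota ik jk' ij jk => /(_ isT isT).
exact.
Qed.

(* Linear shifts [g c z = e_c * z]; the coefficient vector [e] is chosen so
   that any two distinct windows differ on their [y]- or [x]-coefficient. *)
Definition linear_coeffs : seq nat := [:: 0; 0; 1; 1; 2; 2; 3; 3; 0; 1; 3].
Definition linear_shift (c z : nat) : nat := nth 0 linear_coeffs c * z.

Lemma linear_coeffs_small c : nth 0 linear_coeffs c <= 3.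
Proof. by do 11 case: c => [//|c]; rewrite nth_default. Qed.

Definition coeffs_separated (coef : nat -> nat) (i j : nat) : bool :=
  (coef (ycol i) != coef (ycol j)) || (coef (xcol i) != coef (xcol j)).

Lemma linear_coeffs_separated i j : i < j -> j.+1 < 11 ->
  coeffs_separated (nth 0 linear_coeffs) i j.
Proof. exact: all_window_pairsP. Qed.

Lemma linear_shift_separating n : coprime n 6 -> separating_shift 11 n linear_shift.
Proof.
move=> cop6 i j z z' ij jk zn z'n ey ex.
have small := linear_coeffs_small.
case/orP: (linear_coeffs_separated ij jk) => ne.
  exact: (small_coeff_cancel cop6 (small _) (small _) ne zn z'n ey).
exact: (small_coeff_cancel cop6 (small _) (small _) ne zn z'n ex).
Qed.

Lemma window_order_coprime6 n : 0 < n -> coprime n 6 -> window_order 11 n.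
Proof.
by move=> n_gt0 cop6; exact: window_order_shift n_gt0 (linear_shift_separating cop6).
Qed.

(* Tabulated shifts, checked by computation, for the orders 4, 8, 9, 12, 24
   and 27, where no linear shift exists. *)
Definition table_shift (tab : seq (seq nat)) (c z : nat) : nat :=
  nth 0 (nth [::] tab c) z.

Definition shift_pair_ok (n : nat) (g : nat -> nat -> nat) (i j : nat) : bool :=
  all (fun z => all (fun z' => (z == z') ||
    ~~ ((g (ycol i) z + g (ycol j) z' == g (ycol i) z' + g (ycol j) z %[mod n]) &&
        (g (xcol i) z + g (xcol j) z' == g (xcol i) z' + g (xcol j) z %[mod n])))
  (iota 0 n)) (iota 0 n).

Definition separating_shiftb (k n : nat) (g : nat -> nat -> nat) : bool :=
  all (fun i => all (fun j => (i < j) && (j.+1 < k) ==> shift_pair_ok n g i j)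
    (iota 0 k)) (iota 0 k).

Lemma separating_shiftP k n g : separating_shiftb k n g -> separating_shift k n g.
Proof.
move=> /all_window_pairsP ok i j z z' ij jk zn z'n ey ex.
have := allP (allP (ok i j ij jk) z _) z'; rewrite !mem_iota zn z'n => /(_ isT isT).
by rewrite ey ex !eqxx orbF => /eqP.
Qed.

Lemma window_order_table n tab :
  0 < n -> separating_shiftb 11 n (table_shift tab) -> window_order 11 n.
Proof. by move=> n_gt0 /separating_shiftP; exact: window_order_shift. Qed.

Definition shift_table4 : seq (seq nat) := [:: [:: 0; 0; 1; 3]; [:: 0; 1; 2; 2]; [:: 0; 3; 2; 1]; [:: 0; 0; 3; 0]; [:: 0; 2; 0; 2]; [:: 0; 1; 1; 3]; [:: 0; 1; 2; 3]; [:: 0; 2; 0; 1]; [:: 0; 2; 1; 1]; [:: 0; 3; 3; 3]; [:: 0; 3; 3; 0]].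
Definition shift_table8 : seq (seq nat) := [:: [:: 0; 6; 6; 0; 2; 4; 2; 3]; [:: 0; 4; 3; 5; 3; 5; 1; 1]; [:: 0; 2; 1; 5; 1; 6; 3; 1]; [:: 0; 7; 0; 3; 2; 7; 2; 5]; [:: 0; 3; 7; 0; 5; 0; 2; 6]; [:: 0; 3; 1; 1; 7; 6; 4; 0]; [:: 0; 1; 2; 1; 7; 7; 7; 2]; [:: 0; 1; 2; 4; 3; 5; 6; 5]; [:: 0; 0; 0; 6; 0; 1; 3; 5]; [:: 0; 7; 4; 0; 0; 0; 5; 6]; [:: 0; 4; 5; 5; 3; 7; 5; 6]].
Definition shift_table9 : seq (seq nat) := [:: [:: 0; 1; 1; 6; 6; 4; 0; 6; 2]; [:: 0; 0; 2; 8; 2; 8; 7; 3; 7]; [:: 0; 4; 7; 2; 1; 2; 8; 7; 4]; [:: 0; 3; 1; 1; 8; 3; 8; 1; 3]; [:: 0; 2; 0; 1; 7; 3; 2; 3; 8]; [:: 0; 7; 6; 2; 5; 2; 2; 8; 5]; [:: 0; 0; 3; 2; 3; 5; 6; 2; 5]; [:: 0; 6; 0; 3; 1; 0; 4; 5; 0]; [:: 0; 3; 1; 7; 2; 2; 8; 6; 6]; [:: 0; 2; 3; 2; 7; 4; 6; 6; 7]; [:: 0; 1; 2; 6; 5; 4; 4; 1; 3]].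
Definition shift_table12 : seq (seq nat) := [:: [:: 0; 7; 3; 8; 7; 1; 7; 11; 11; 0; 1; 7]; [:: 0; 8; 2; 9; 6; 11; 10; 6; 3; 5; 11; 7]; [:: 0; 4; 6; 10; 2; 11; 1; 3; 10; 8; 6; 8]; [:: 0; 6; 8; 0; 8; 8; 5; 10; 8; 6; 7; 6]; [:: 0; 9; 0; 2; 1; 9; 4; 4; 6; 5; 8; 3]; [:: 0; 5; 4; 10; 1; 0; 7; 4; 3; 9; 8; 3]; [:: 0; 1; 6; 11; 4; 11; 5; 0; 1; 4; 1; 1]; [:: 0; 1; 5; 3; 10; 6; 10; 2; 7; 8; 3; 5]; [:: 0; 10; 8; 7; 10; 0; 0; 5; 11; 8; 0; 4]; [:: 0; 6; 4; 1; 1; 1; 2; 3; 4; 2; 11; 7]; [:: 0; 11; 5; 0; 8; 7; 4; 8; 1; 2; 8; 3]].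
Definition shift_table24 : seq (seq nat) := [:: [:: 0; 14; 15; 10; 7; 0; 15; 2; 6; 1; 15; 0; 13; 5; 1; 1; 1; 11; 4; 20; 13; 3; 8; 7]; [:: 0; 16; 7; 12; 23; 16; 16; 18; 14; 1; 14; 23; 8; 2; 20; 17; 16; 9; 6; 6; 15; 7; 7; 13]; [:: 0; 16; 6; 14; 10; 12; 5; 3; 23; 0; 2; 20; 23; 10; 22; 20; 19; 0; 12; 12; 11; 9; 15; 16]; [:: 0; 5; 5; 19; 16; 21; 7; 6; 17; 20; 0; 17; 0; 23; 5; 4; 15; 11; 2; 7; 21; 11; 15; 3]; [:: 0; 13; 14; 19; 3; 1; 6; 14; 11; 14; 5; 2; 1; 6; 16; 6; 17; 7; 21; 11; 2; 1; 10; 20]; [:: 0; 23; 4; 20; 0; 8; 23; 23; 13; 23; 22; 6; 15; 6; 2; 18; 3; 21; 4; 16; 3; 16; 10; 7]; [:: 0; 20; 20; 18; 22; 2; 14; 0; 1; 23; 18; 4; 23; 17; 7; 3; 11; 23; 14; 15; 7; 13; 6; 23]; [:: 0; 7; 15; 0; 9; 15; 12; 1; 3; 20; 1; 11; 10; 23; 3; 17; 19; 7; 16; 12; 21; 14; 16; 22]; [:: 0; 13; 18; 7; 10; 22; 13; 16; 22; 13; 4; 11; 18; 19; 18; 18; 17; 0; 23; 19; 10; 7; 11; 7]; [:: 0; 10; 16; 18; 5; 17; 3; 7; 2; 15; 11; 0; 3; 20; 11; 9; 9; 12; 14; 23; 9; 21; 20; 7]; [:: 0; 10; 21; 2; 9;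 4; 18; 20; 9; 7; 18; 19; 1; 15; 20; 10; 2; 15; 0; 8; 3; 19; 21; 5]].
Definition shift_table27 : seq (seq nat) := [:: [:: 0; 3; 15; 14; 3; 19; 3; 21; 26; 23; 0; 20; 1; 11; 18; 25; 19; 23; 14; 23; 4; 2; 9; 15; 19; 6; 0]; [:: 0; 24; 23; 11; 26; 26; 19; 21; 7; 15; 5; 17; 18; 9; 25; 5; 16; 2; 23; 7; 18; 5; 7; 2; 4; 8; 21]; [:: 0; 26; 12; 17; 23; 7; 7; 15; 9; 14; 6; 18; 10; 12; 17; 3; 11; 18; 26; 3; 21; 15; 20; 23; 21; 20; 16]; [:: 0; 14; 8; 18; 10; 20; 6; 17; 22; 25; 11; 10; 22; 8; 23; 18; 11; 18; 26; 9; 0; 6; 12; 10; 1; 0; 12]; [:: 0; 23; 19; 7; 11; 1; 6; 6; 23; 9; 7; 22; 12; 1; 22; 11; 17; 0; 19; 16; 19; 11; 4; 15; 6; 3; 19]; [:: 0; 8; 22; 8; 26; 6; 16; 13; 6; 6; 2; 5; 26; 9; 15; 15; 13; 11; 2; 7; 5; 18; 18; 19; 8; 26; 0]; [:: 0; 12; 1; 20; 26; 15; 13; 2; 7; 19; 5; 17; 9; 21; 3; 12; 20; 12; 11; 21; 25; 15; 3; 5; 8; 21; 13]; [:: 0; 14; 10; 17; 21; 5; 19; 25; 8; 23; 13; 1; 12; 23; 25; 8; 10; 19; 3; 14; 9; 7; 9; 17; 13; 20; 19]; [:: 0; 22; 10; 11; 14; 7; 14; 22; 18; 15; 12; 12;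 22; 11; 9; 24; 7; 1; 13; 20; 19; 19; 6; 3; 16; 26; 10]; [:: 0; 23; 22; 0; 20; 2; 24; 20; 12; 19; 19; 3; 3; 15; 19; 24; 3; 5; 20; 21; 12; 8; 20; 25; 1; 18; 6]; [:: 0; 4; 9; 16; 6; 15; 5; 8; 15; 13; 13; 15; 10; 7; 26; 11; 11; 23; 19; 14; 2; 8; 18; 14; 9; 6; 12]].

Lemma window_order4 : window_order 11 4.
Proof. by apply: (window_order_table (tab := shift_table4)); vm_compute. Qed.
Lemma window_order8 : window_order 11 8.
Proof. by apply: (window_order_table (tab := shift_table8)); vm_compute. Qed.
Lemma window_order9 : window_order 11 9.
Proof. by apply: (window_order_table (tab := shift_table9)); vm_compute. Qed.
Lemma window_order12 : window_order 11 12.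
Proof. by apply: (window_order_table (tab := shift_table12)); vm_compute. Qed.
Lemma window_order24 : window_order 11 24.
Proof. by apply: (window_order_table (tab := shift_table24)); vm_compute. Qed.
Lemma window_order27 : window_order 11 27.
Proof. by apply: (window_order_table (tab := shift_table27)); vm_compute. Qed.

(* Prime powers [p ^ a], [a <> 1], from the exponents 2 and 3. *)
Lemma window_order_pow p a : window_order 11 (p ^ 2) -> window_order 11 (p ^ 3) ->
  a != 1 -> window_order 11 (p ^ a).
Proof.
move=> W2 W3; elim/ltn_ind: a => -[|[|[|[|a]]]] IH a_neq1 //.
  by rewrite expn0; exact: window_order1.
by rewrite -[a.+4]/(2 + a.+2) expnD; apply: window_order_mul W2 (IH _ _ _).
Qed.

Lemma window_order_pow2 a : a != 1 -> window_order 11 (2 ^ a).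
Proof. by apply: window_order_pow; [exact: window_order4 | exact: window_order8]. Qed.

Lemma window_order_pow3 b : b != 1 -> window_order 11 (3 ^ b).
Proof. by apply: window_order_pow; [exact: window_order9 | exact: window_order27]. Qed.

(* [2 ^ a * 3] for [a >= 2]: [24] directly, otherwise [2 ^ (a - 2) * 12]. *)
Lemma window_order_pow2_mul3 a : 2 <= a -> window_order 11 (2 ^ a * 3).
Proof.
move=> a_ge2; have [->|a_neq3] := eqVneq a 3; first exact: window_order24.
rewrite -(subnK a_ge2) expnD -mulnA.
apply: window_order_mul _ window_order12.
by apply: window_order_pow2; rewrite -(eqn_add2r 2) subnK.
Qed.

(* Write [v = m' * 2 ^ a * 3 ^ b] with gcd(m', 6) = 1.  The gcd conditions
   say exactly that [a <> 1] and that [b = 1] forces [a >= 2]. *)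
Lemma window_order_admissible v : 0 < v -> gcdn v 4 != 2 -> gcdn v 18 != 3 ->
  window_order 11 v.
Proof.
move=> v_gt0 gcd4 gcd18.
have [m cop2m ev] := pfactor_coprime (isT : prime 2) v_gt0.
have m_gt0 : 0 < m by move: v_gt0; rewrite ev muln_gt0 => /andP[].
have [m' cop3m' em] := pfactor_coprime (isT : prime 3) m_gt0.
set a := logn 2 v in ev; set b := logn 3 m in em.
have m'_gt0 : 0 < m' by move: m_gt0; rewrite em muln_gt0 => /andP[].
have cop2m' : coprime 2 m' by move: cop2m; rewrite em coprimeMr => /andP[].
have cop6m' : coprime m' 6.
  by rewrite (_ : 6 = 2 * 3) // coprimeMr !(coprime_sym m') cop2m' cop3m'.
have a_neq1 : a != 1.
  apply/eqP => a1; move: gcd4; rewrite ev a1 expn1 (_ : 4 = 2 * 2) //.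
  by rewrite -muln_gcdl gcdnC (eqP cop2m).
have b_neq1_or_a_ge2 : (b != 1) || (2 <= a).
  case: (b =P 1) => //= b1; case: a a_neq1 ev {gcd4} => [|[|a]] // _ ev.
  move: gcd18; rewrite ev em b1 expn0 muln1 expn1 (_ : 18 = 6 * 3) // -muln_gcdl.
  by rewrite (eqP cop6m').
have -> : v = m' * (2 ^ a * 3 ^ b) by rewrite ev em -mulnA [3 ^ _ * _]mulnC.
apply: window_order_mul; first exact: window_order_coprime6.
have [b1 | b_neq1] := eqVneq b 1.
  by rewrite b1 expn1; apply: window_order_pow2_mul3; rewrite b1 in b_neq1_or_a_ge2.
exact: window_order_mul (window_order_pow2 a_neq1) (window_order_pow3 b_neq1).
Qed.

Theorem mainTheorem11 (v : nat) :
  2 <= v -> gcdn v 4 != 2 -> gcdn v 18 != 3 ->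
  forall d : nat, 0 < d -> d + 1 <= v ->
    exists A : 'I_((d + 1) * v ^ 2) -> 'I_11 -> 'I_v, is_CDA d 2 A.
Proof.
move=> v_ge2 gcd4 gcd18 d _ d_lt_v.
have [B B_code] := window_order_admissible (ltnW v_ge2) gcd4 gcd18.
by exists (code_array B d_lt_v); exact: code_array_CDA.
Qed.
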